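(* Let $S$ be a $\Gamma$-AG$^{**}$-groupoid. Then $S$ is intra-regular if and only if every left $\Gamma$-ideal $L$ of $S$ is $\Gamma$-idempotent, i.e. $L\Gamma L=L$.
   Context: Let $S$ and $\Gamma$ be nonempty sets with a map $S\times\Gamma\times S\to S$, $(x,\gamma,y)\mapsto x\gamma y$. $S$ is a $\Gamma$-AG-groupoid if $(x\gamma y)\delta z=(z\gamma y)\delta x$ for all $x,y,z\in S$, $\gamma,\delta\in\Gamma$; it is a $\Gamma$-AG$^{**}$-groupoid if moreover $a\alpha(b\beta c)=b\alpha(a\beta c)$ for all $a,b,c\in S$, $\alpha,\beta\in\Gamma$. For subsets $A,B\subseteq S$, $A\Gamma B=\{a\gamma b: a\in A,\gamma\in\Gamma,b\in B\}$. $S$ is intra-regular if for every $a\in S$ there exist $x,y\in S$ and $\beta,\gamma,\delta\in\Gamma$ with $a=(x\beta(a\delta a))\gamma y$. A nonempty subset $L$ is a left $\Gamma$-ideal if $S\Gamma L\subseteq L$. *)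

Definition GammaAG {S G : Type} (op : S -> G -> S -> S) : Prop :=
  forall (x y z : S) (g d : G), op (op x g y) d z = op (op z g y) d x.

Definition GammaAGss {S G : Type} (op : S -> G -> S -> S) : Prop :=
  GammaAG op /\
  forall (a b c : S) (al be : G), op a al (op b be c) = op b al (op a be c).

Definition gprod {S G : Type} (op : S -> G -> S -> S) (A B : S -> Prop) : S -> Prop :=
  fun s => exists a g b, A a /\ B b /\ s = op a g b.

Definition subset {S : Type} (A B : S -> Prop) : Prop := forall x, A x -> B x.

Definition set_eq {S : Type} (A B : S -> Prop) : Prop := forall x, A x <-> B x.

Definition full {S : Type} : S -> Prop := fun _ => True.

Definition intra_regular {S G : Type} (op : S -> G -> S -> S) : Prop :=
  forall a : S, exists (x y : S) (be ga de : G),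
    a = op (op x be (op a de a)) ga y.

Definition left_Gamma_ideal {S G : Type} (op : S -> G -> S -> S) (L : S -> Prop) : Prop :=
  (exists l, L l) /\ subset (gprod op full L) L.

From Stdlib Require Import Setoid.

(* If [a = (x β (a δ a)) γ y], the two Γ-AG** laws move [a] to the right end:
   [a = (y β (x δ a)) γ a], so [a] lies in [L Γ L] for any left ideal [L]
   containing it.  Conversely, if every left ideal is idempotent, so is [S],
   hence [S = S Γ S]; this makes [S Γ a] a left ideal, and idempotence of
   [{a} ∪ S Γ a] puts [a] into [S Γ a].  Then [a ∈ (S Γ a) Γ (S Γ a)], and
   the same two laws rearrange such a factorisation into the intra-regular
   shape. *)

Section GammaAGss.

Variables (S G : Type) (op : S -> G -> S -> S).
Hypothesis left_invertive : GammaAG op.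
Hypothesis paramedial :
  forall (a b c : S) (al be : G), op a al (op b be c) = op b al (op a be c).

Lemma left_ideal_square_subset (L : S -> Prop) :
  left_Gamma_ideal op L -> subset (gprod op L L) L.
Proof.
intros [_ HL] x [p [g [q [Hp [Hq ->]]]]].
apply HL; exists p, g, q; repeat split; auto.
Qed.

Lemma intra_regular_right_factor (a x y : S) (be ga de : G) :
  a = op (op x be (op a de a)) ga y ->
  a = op (op y be (op x de a)) ga a.
Proof.
intros E; rewrite E at 1; rewrite paramedial, left_invertive; reflexivity.
Qed.

Lemma intra_regular_left_ideal_idempotent (L : S -> Prop) :
  intra_regular op -> left_Gamma_ideal op L -> set_eq (gprod op L L) L.
Proof.
intros IR HL x; split; [apply left_ideal_square_subset; exact HL|].
intros Hx; destruct HL as [_ HL].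
destruct (IR x) as [u [y [be [ga [de E]]]]].
exists (op y be (op u de x)), ga, x; repeat split.
- apply HL; exists y, be, (op u de x); repeat split; auto.
  apply HL; exists u, de, x; repeat split; auto.
- exact Hx.
- apply intra_regular_right_factor; exact E.
Qed.

Definition left_multiples (a : S) : S -> Prop := fun x => exists u g, x = op u g a.

Lemma left_multiples_square_intra_regular (a : S) :
  gprod op (left_multiples a) (left_multiples a) a ->
  exists (x y : S) (be ga de : G), a = op (op x be (op a de a)) ga y.
Proof.
intros [p [g [q [[s [d ->]] [[t [e ->]] E]]]]].
assert (Ea : a = op (op a d a) g (op t e s)).
{ rewrite E at 1; rewrite paramedial, left_invertive, paramedial; reflexivity. }
exists (op a g (op t e s)), (op t e s), d, g, d.
assert (Eaa : op a d a = op (op a g (op t e s)) d (op a d a)).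
{ rewrite left_invertive, <- Ea; reflexivity. }
rewrite <- Eaa; exact Ea.
Qed.

Section IdempotentLeftIdeals.

Hypothesis idempotent :
  forall L : S -> Prop, left_Gamma_ideal op L -> set_eq (gprod op L L) L.
Variables (s0 : S) (g0 : G).

Lemma op_surjective (t : S) : exists m e n, t = op m e n.
Proof.
assert (Hfull : left_Gamma_ideal op (@full S)).
{ split; [exists s0; exact I | intros x _; exact I]. }
destruct (proj2 (idempotent _ Hfull t) I) as [m [e [n [_ [_ E]]]]]; eauto.
Qed.

(* [S Γ (S Γ a) ⊆ S Γ a] needs [S = S Γ S]: write [t = m ε n] and reassociate. *)
Lemma left_multiples_closed (a s t : S) (g d : G) :
  left_multiples a (op s g (op t d a)).
Proof.
destruct (op_surjective t) as [m [e [n ->]]].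
exists (op (op s d m) e n), g.
rewrite (left_invertive m n a e d), paramedial, left_invertive; reflexivity.
Qed.

Lemma left_multiples_left_ideal (a : S) : left_Gamma_ideal op (left_multiples a).
Proof.
split; [exists (op s0 g0 a), s0, g0; reflexivity|].
intros x [s [g [l [_ [[u [d ->]] ->]]]]]; apply left_multiples_closed.
Qed.

Lemma left_multiples_self (a : S) : left_multiples a a.
Proof.
set (L := fun x => x = a \/ left_multiples a x).
assert (HL : left_Gamma_ideal op L).
{ split; [exists a; left; reflexivity|].
  intros x [s [g [l [_ [[->|[u [d ->]]] ->]]]]].
  - right; exists s, g; reflexivity.
  - right; apply left_multiples_closed. }
destruct (proj2 (idempotent _ HL a) (or_introl eq_refl))
  as [p [g [q [_ [[->|[u [d ->]]] E]]]]].
- exists p, g; exact E.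
- rewrite E at 2; apply left_multiples_closed.
Qed.

Lemma idempotent_left_ideals_intra_regular : intra_regular op.
Proof.
intros a; apply left_multiples_square_intra_regular.
apply (idempotent _ (left_multiples_left_ideal a)), left_multiples_self.
Qed.

End IdempotentLeftIdeals.

End GammaAGss.

Theorem mainTheorem12 (S G : Type) (s0 : S) (g0 : G) (op : S -> G -> S -> S)
  (HS : GammaAGss op) :
  intra_regular op <->
  (forall L : S -> Prop, left_Gamma_ideal op L -> set_eq (gprod op L L) L).
Proof.
destruct HS as [left_invertive paramedial]; split.
- intros IR L; apply intra_regular_left_ideal_idempotent; assumption.
- intros idempotent.
  exact (idempotent_left_ideals_intra_regular _ _ _ left_invertive paramedial idempotent s0 g0).
Qed.
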